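(* For every integer $n\ge 0$, $$\sum_{\pi\in \mathcal I^C_{2n}(321)}q^{\mathrm{des}^+(\pi)}=\sum_{k\geq 0} \binom{n+1}{2k}q^k=\frac{(1+\sqrt{q})^{n+1}+(1-\sqrt{q})^{n+1}}{2}.$$
   Context: A permutation $\pi\in\mathcal S_m$ is centrosymmetric if $\pi(i)+\pi(m+1-i)=m+1$ for all $1\le i\le m$. $\mathcal I^C_m(321)$ denotes the set of centrosymmetric involutions $\pi\in\mathcal S_m$ (i.e. $\pi=\pi^{-1}$) that avoid the pattern $321$ (no indices $i<j<k$ with $\pi(i)>\pi(j)>\pi(k)$). A descent of $\pi\in\mathcal S_m$ is a position $i\in\{1,\dots,m-1\}$ with $\pi(i)>\pi(i+1)$; $\mathrm{Des}(\pi)$ is the set of descents. For $\pi\in\mathcal S_m$ with $n=\lfloor m/2\rfloor$, $\mathrm{Des}^+(\pi)=\mathrm{Des}(\pi)\cap\{1,\dots,n\}$ and $\mathrm{des}^+(\pi)=|\mathrm{Des}^+(\pi)|$. *)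

From HB Require Import structures.
From mathcomp Require Import all_boot all_order all_algebra all_fingroup.
Set Implicit Arguments. Unset Strict Implicit. Unset Printing Implicit Defensive.

(* Permutations of {1..m} are represented as pi : 'S_m acting on 'I_m = {0..m-1};
   the 1-based value of pi at 1-based position i+1 is (pi i).+1. *)

(* centrosymmetric: pi(i) + pi(m+1-i) = m+1 (1-based);
   0-based position i corresponds to 1-based i+1, and rev_ord i (value m-1-i)
   to 1-based m+1-(i+1). *)
Definition centrosymmetric (m : nat) (pi : 'S_m) : bool :=
  [forall i : 'I_m, (pi i).+1 + (pi (rev_ord i)).+1 == m.+1].

Definition involution (m : nat) (pi : 'S_m) : bool := (pi^-1)%g == pi.

Definition avoids321 (m : nat) (pi : 'S_m) : bool :=
  ~~ [exists i : 'I_m, exists j : 'I_m, exists k : 'I_m,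
        [&& i < j, j < k, pi j < pi i & pi k < pi j]].

Definition IC321 (m : nat) (pi : 'S_m) : bool :=
  [&& centrosymmetric pi, involution pi & avoids321 pi].

Definition oneline (m : nat) (pi : 'S_m) : seq nat := [seq val (pi i) | i <- enum 'I_m].

(* descent at 1-based position p in {1..m-1}: pi(p) > pi(p+1).
   With 0-based j = p-1: nth j > nth (j+1), j+1 < m. *)
Definition is_descent (m : nat) (pi : 'S_m) (p : nat) : bool :=
  [&& 1 <= p, p < m & nth 0 (oneline pi) p.-1 > nth 0 (oneline pi) p].

Definition desplus (m : nat) (pi : 'S_m) : nat :=
  \sum_(1 <= p < (m./2).+1) is_descent pi p.

(* A 321-avoiding involution f is determined by its excedances (x < f x) and its
   deficiencies (f x < x): the k-th excedance is matched with the k-th deficiency.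
   For a centrosymmetric f on 2n points the right half mirrors the left half, and the
   excedance word b of the left half can be any word in {0,1}^n: a non-excedance x < n
   is then a deficiency exactly when the ballot height of b before x is positive.
   This identifies I^C_{2n}(321) with {0,1}^n, and a descent p <= n of f becomes the
   end of a maximal run of ones of b.  Counting words by runs of ones gives the same
   recursion as the even and odd parts of (1 + sqrt q)^(n+1). *)

From HB Require Import structures.
From mathcomp Require Import all_boot all_order all_algebra all_fingroup.
From mathcomp Require Import zify ring.
Set Implicit Arguments. Unset Strict Implicit. Unset Printing Implicit Defensive.
Import GRing.Theory Num.Theory.

Section InvolutionsBelow.
Variable m : nat.

Definition bounded (f : nat -> nat) := forall x, x < m -> f x < m.
Definition involutive_below (f : nat -> nat) := forall x, x < m -> f (f x) = x.
Definition exc_increasing (f : nat -> nat) :=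
  forall x y, x < y -> y < m -> x < f x -> y < f y -> f x < f y.
Definition def_increasing (f : nat -> nat) :=
  forall x y, x < y -> y < m -> f x < x -> f y < y -> f x < f y.
Definition no_fixpoint_in_arcs (f : nat -> nat) :=
  forall e x, e < x -> x < f e -> f e < m -> f x = x -> False.
Definition avoids321_below (f : nat -> nat) :=
  forall i j k, i < j -> j < k -> k < m -> f j < f i -> f k < f j -> False.

Variable f : nat -> nat.
Hypotheses (f_bounded : bounded f) (f_invol : involutive_below f).

Lemma involutive_below_inj x y : x < m -> y < m -> f x = f y -> x = y.
Proof. by move=> xm ym e; rewrite -(f_invol xm) -(f_invol ym) e. Qed.

Hypothesis f_avoids : avoids321_below f.

Lemma avoids321_exc_increasing : exc_increasing f.
Proof.
move=> x y xy ym xf yf; rewrite ltnNge; apply/negP => le.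
have fyx : f y != f x.
  by apply/eqP => /(involutive_below_inj ym (ltn_trans xy ym)); lia.
have lt : f y < f x by rewrite ltn_neqAle fyx le.
by apply: (f_avoids xy yf (f_bounded ym) lt); rewrite f_invol.
Qed.

Lemma avoids321_no_fixpoint_in_arcs : no_fixpoint_in_arcs f.
Proof.
move=> e x ex xfe fem fx.
by apply: (f_avoids ex xfe fem); rewrite fx // f_invol //; lia.
Qed.

End InvolutionsBelow.

Section Avoidance.
Variables (m : nat) (f : nat -> nat).
Hypotheses (f_bounded : bounded m f) (f_invol : involutive_below m f).
Hypotheses (f_exc : exc_increasing m f) (f_def : def_increasing m f).
Hypothesis f_arcs : no_fixpoint_in_arcs m f.

Lemma arcs_avoids321 : avoids321_below m f.
Proof.
move=> i j k ij jk km fji fkj.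
have jm : j < m by lia.
have im : i < m by lia.
case: (ltngtP j (f j)) => [jE|jD|jF].
- case: (ltnP i (f i)) => [iE|iN]; last lia.
  by have := f_exc ij jm iE jE; lia.
- case: (ltnP (f k) k) => [kD|kN]; last lia.
  by have := f_def jk km jD kD; lia.
- case: (ltnP i (f i)) => [iE|iN]; last lia.
  by apply: (f_arcs ij); [lia | exact: f_bounded | rewrite -jF].
Qed.

Lemma descentE j : j.+1 < m ->
  (f j.+1 < f j) = (j < f j) && (f j.+1 < j.+1).
Proof.
move=> jm; have j0 : j < m by lia.
case: (ltngtP j (f j)) => [jE|jD|jF].
- case: (ltngtP (f j.+1) j.+1) => [kD|kE|kF]; first lia.
    by have := f_exc (ltnSn j) jm jE kE; lia.
  apply/negP => lt; apply: (f_arcs (ltnSn j)) => //; [lia | exact: f_bounded].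
- case: (ltngtP (f j.+1) j.+1) => [kD|kE|kF] /=; [|lia|lia].
  by have := f_def (ltnSn j) jm jD kD; lia.
- case: (ltngtP (f j.+1) j.+1) => [kD|kE|kF] /=; [|lia|lia].
  apply/negP => lt; have e0 : f j.+1 < j by lia.
  by apply: (f_arcs e0); rewrite ?f_invol // -jF.
Qed.

End Avoidance.

Section Uniqueness.
Variables (m : nat) (f1 f2 : nat -> nat).
Hypotheses (f1_bounded : bounded m f1) (f2_bounded : bounded m f2).
Hypotheses (f1_invol : involutive_below m f1) (f2_invol : involutive_below m f2).
Hypotheses (f1_exc : exc_increasing m f1) (f2_exc : exc_increasing m f2).
Hypothesis same_exc : forall x, x < m -> (x < f1 x) = (x < f2 x).
Hypothesis same_def : forall x, x < m -> (f1 x < x) = (f2 x < x).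

Lemma exc_image_leq x : x < m -> x < f1 x ->
  (forall e, e < x -> e < f1 e -> f1 e = f2 e) -> f2 x <= f1 x.
Proof.
move=> xm xE IH; rewrite leqNgt; apply/negP => lt.
have ym := f1_bounded xm.
have yD2 : f2 (f1 x) < f1 x by rewrite -same_def // f1_invol.
set z := f2 (f1 x) in yD2.
have zm : z < m by exact: f2_bounded.
have zE2 : z < f2 z by rewrite /z f2_invol.
case: (ltngtP z x) => [zx|xz|zx].
- have zE1 : z < f1 z by rewrite same_exc.
  have := IH z zx zE1; rewrite /z f2_invol // => e.
  by have := involutive_below_inj f1_invol zm xm e; lia.
- have xE2 : x < f2 x by rewrite -same_exc.
  by have := f2_exc xz zm xE2 zE2; rewrite /z f2_invol //; lia.
- by have := congr1 f2 zx; rewrite /z f2_invol //; lia.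
Qed.

End Uniqueness.

Lemma exc_increasing_involution_unique m f1 f2 :
  bounded m f1 -> bounded m f2 -> involutive_below m f1 -> involutive_below m f2 ->
  exc_increasing m f1 -> exc_increasing m f2 ->
  (forall x, x < m -> (x < f1 x) = (x < f2 x)) ->
  (forall x, x < m -> (f1 x < x) = (f2 x < x)) ->
  forall x, x < m -> f1 x = f2 x.
Proof.
move=> B1 B2 I1 I2 E1 E2 HE HD.
have sym_HE x : x < m -> (x < f2 x) = (x < f1 x) by move=> h; rewrite HE.
have sym_HD x : x < m -> (f2 x < x) = (f1 x < x) by move=> h; rewrite HD.
have on_exc : forall x, x < m -> x < f1 x -> f1 x = f2 x.
  elim/ltn_ind => x IH xm xE.
  have IH1 e : e < x -> e < f1 e -> f1 e = f2 e by move=> ex; apply: IH; lia.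
  have IH2 e : e < x -> e < f2 e -> f2 e = f1 e.
    by move=> ex eE; rewrite IH1 // HE //; lia.
  have xE2 : x < f2 x by rewrite -HE.
  apply/eqP; rewrite eqn_leq (exc_image_leq B2 B1 I2 I1 E1 sym_HE sym_HD) //.
  exact: (exc_image_leq B1 B2 I1 I2 E2 HE HD).
move=> x xm; case: (ltngtP x (f1 x)) => [xE|xD|xF].
- exact: on_exc.
- have fxm := B1 _ xm.
  have := on_exc _ fxm; rewrite I1 // => /(_ xD) e.
  by rewrite [in RHS]e I2.
- have : ~~ (x < f2 x) && ~~ (f2 x < x) by rewrite -HE // -HD // -xF ltnn.
  lia.
Qed.

Definition count_below (P : pred nat) x := count P (iota 0 x).

Lemma count_belowS (P : pred nat) x : count_below P x.+1 = count_below P x + P x.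
Proof. by rewrite /count_below -addn1 iotaD count_cat /= addn0. Qed.

Lemma count_belowD (P : pred nat) x k :
  count_below P (x + k) = count_below P x + count P (iota x k).
Proof. by rewrite /count_below iotaD count_cat. Qed.

Lemma leq_count_below (P : pred nat) x y : x <= y -> count_below P x <= count_below P y.
Proof. by move=> /subnK <-; rewrite addnC count_belowD leq_addr. Qed.

Lemma ltn_count_below (P : pred nat) x y : x < y -> P x -> count_below P x < count_below P y.
Proof.
move=> xy Px; apply: (@leq_trans (count_below P x.+1)); last exact: leq_count_below.
by rewrite count_belowS Px addn1.
Qed.

Lemma count_iota_rev (P : pred nat) a k c : a + k <= c.+1 ->
  count (fun y => P (c - y)) (iota a k) = count P (iota (c.+1 - a - k) k).
Proof.
elim: k a => [|k IH] a le //=.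
rewrite IH; last lia.
set s := c.+1 - a - k.+1.
have -> : c.+1 - a.+1 - k = s by rewrite /s; lia.
have -> : c - a = s + k by rewrite /s; lia.
have e2 : count P (iota s k.+1) = count P (iota s k) + P (s + k).
  by rewrite -addn1 iotaD count_cat /= addn0.
by move: e2 => /=; lia.
Qed.

Section Select.
Variables (m : nat) (P : pred nat).

Definition select r := nth 0 (filter P (iota 0 m)) r.

Lemma index_filter_iota y : P y -> y < m -> index y (filter P (iota 0 m)) = count_below P y.
Proof.
move=> Py ym.
have -> : iota 0 m = iota 0 y ++ y :: iota y.+1 (m - y.+1).
  by rewrite {1}(_ : m = y + (m - y.+1).+1); [rewrite iotaD | lia].
rewrite filter_cat /= Py index_cat.
have -> : (y \in filter P (iota 0 y)) = false.
  by apply/negbTE; rewrite mem_filter mem_iota add0n ltnn !andbF.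
by rewrite /= eqxx addn0 size_filter.
Qed.

Lemma select_count y : P y -> y < m -> select (count_below P y) = y.
Proof.
move=> Py ym; rewrite /select -index_filter_iota //.
by apply: nth_index; rewrite mem_filter Py mem_iota.
Qed.

Lemma selectP r : r < count_below P m ->
  [/\ P (select r), select r < m & count_below P (select r) = r].
Proof.
move=> rlt.
have rs : r < size (filter P (iota 0 m)) by rewrite size_filter.
have : select r \in filter P (iota 0 m) by exact: mem_nth.
rewrite mem_filter mem_iota add0n => /andP[Py ym]; split => //.
rewrite -index_filter_iota // /select index_uniq //.
exact/filter_uniq/iota_uniq.
Qed.

End Select.

Fixpoint height (b : nat -> bool) x :=
  if x is x'.+1 then (if b x' then (height b x').+1 else (height b x').-1) else 0.

Definition left_def (b : nat -> bool) x := ~~ b x && (0 < height b x).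

Section CodeInvolution.
Variables (n : nat) (b : nat -> bool).
Local Notation m := n.*2.

Definition is_exc x := (x < m) && (if x < n then b x else left_def b (m.-1 - x)).
Definition is_def x := (x < m) && (if x < n then left_def b x else b (m.-1 - x)).

Lemma height_count z : z <= n -> height b z + count_below (left_def b) z = count_below b z.
Proof.
elim: z => [|z IH] zn //=.
rewrite !count_belowS -IH; last lia.
rewrite /left_def; case: (b z) => /=; first lia.
by case: (height b z) => //= h; lia.
Qed.

Lemma count_exc_left z : z <= n -> count_below is_exc z = count_below b z.
Proof.
move=> zn; apply: eq_in_count => y; rewrite mem_iota => /andP[_ yz].
have ym : y < m by lia.
have yn : y < n by lia.
by rewrite /is_exc ym yn.
Qed.

Lemma count_def_left z : z <= n -> count_below is_def z = count_below (left_def b) z.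
Proof.
move=> zn; apply: eq_in_count => y; rewrite mem_iota => /andP[_ yz].
have ym : y < m by lia.
have yn : y < n by lia.
by rewrite /is_def ym yn.
Qed.

Lemma count_exc_right z : z <= n ->
  count_below is_exc (m - z) = count_below b n + count (left_def b) (iota z (n - z)).
Proof.
move=> zn; rewrite (_ : m - z = n + (n - z)); last lia.
rewrite count_belowD count_exc_left //; congr (_ + _).
case: (posnP (n - z)) => [->|nz] //.
have -> : iota z (n - z) = iota (m.-1.+1 - n - (n - z)) (n - z) by congr iota; lia.
rewrite -count_iota_rev; last lia.
apply: eq_in_count => y; rewrite mem_iota => /andP[zy yz].
have ym : y < m by lia.
have yn : (y < n) = false by lia.
by rewrite /is_exc ym yn.
Qed.

Lemma count_def_right z : z <= n ->
  count_below is_def (m - z) = count_below (left_def b) n + count b (iota z (n - z)).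
Proof.
move=> zn; rewrite (_ : m - z = n + (n - z)); last lia.
rewrite count_belowD count_def_left //; congr (_ + _).
case: (posnP (n - z)) => [->|nz] //.
have -> : iota z (n - z) = iota (m.-1.+1 - n - (n - z)) (n - z) by congr iota; lia.
rewrite -count_iota_rev; last lia.
apply: eq_in_count => y; rewrite mem_iota => /andP[zy yz].
have ym : y < m by lia.
have yn : (y < n) = false by lia.
by rewrite /is_def ym yn.
Qed.

Lemma count_exc_def_left z : z <= n ->
  count_below is_exc z = count_below is_def z + height b z.
Proof.
by move=> zn; rewrite count_exc_left // count_def_left // -height_count // addnC.
Qed.

Lemma count_exc_def_right z : z <= n ->
  count_below is_exc (m - z) = count_below is_def (m - z) + height b z.
Proof.
move=> zn; rewrite count_exc_right // count_def_right //.
have e1 : count_below b n = count_below b z + count b (iota z (n - z)).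
  by rewrite -count_belowD subnKC.
have e2 : count_below (left_def b) n =
    count_below (left_def b) z + count (left_def b) (iota z (n - z)).
  by rewrite -count_belowD subnKC.
by have := height_count zn; have := height_count (leqnn n); lia.
Qed.

Lemma count_def_le_exc x : x <= m -> count_below is_def x <= count_below is_exc x.
Proof.
move=> xm; case: (leqP x n) => xn; first by rewrite count_exc_def_left //; lia.
have -> : x = m - (m - x) by lia.
by rewrite count_exc_def_right; lia.
Qed.

Lemma count_exc_def_total : count_below is_exc m = count_below is_def m.
Proof. by have := count_exc_def_right (leq0n n); rewrite subn0 addn0. Qed.

Lemma count_exc_def_balanced x : x < m -> ~~ is_exc x -> ~~ is_def x ->
  count_below is_def x = count_below is_exc x.
Proof.
move=> xm; case: (ltnP x n) => xn.
  rewrite /is_exc /is_def xm xn /= /left_def => nb; rewrite nb /= -leqNgt leqn0 => /eqP h0.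
  by rewrite count_exc_def_left ?h0 ?addn0 //; lia.
set z := m.-1 - x.
have zn : z < n by rewrite /z; lia.
have nxn : (x < n) = false by lia.
rewrite /is_exc /is_def xm nxn /= -/z /left_def => h1 nb.
rewrite nb /= -leqNgt leqn0 in h1.
have hz : height b z.+1 = 0 by rewrite /= (negbTE nb) (eqP h1).
have -> : x = m - z.+1 by rewrite /z; lia.
by rewrite count_exc_def_right // hz addn0.
Qed.

Lemma is_exc_def_disjoint x : is_exc x -> is_def x = false.
Proof.
rewrite /is_exc /is_def /left_def; case: (x < m) => //=; case: (x < n) => /=.
  by move=> ->.
by case/andP => /negbTE ->.
Qed.

Lemma is_def_exc_disjoint x : is_def x -> is_exc x = false.
Proof. by move=> h; apply/negP => /is_exc_def_disjoint; rewrite h. Qed.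

Lemma is_def_rev x : x < m -> is_def (m.-1 - x) = is_exc x.
Proof.
move=> xm; rewrite /is_def /is_exc xm (_ : m.-1 - x < m); last lia.
case: (ltnP x n) => xn.
  by rewrite (_ : (m.-1 - x < n) = false); [congr b; lia | lia].
by rewrite (_ : m.-1 - x < n); last lia.
Qed.

Lemma is_exc_rev x : x < m -> is_exc (m.-1 - x) = is_def x.
Proof.
move=> xm; rewrite /is_def /is_exc xm (_ : m.-1 - x < m); last lia.
case: (ltnP x n) => xn.
  by rewrite (_ : (m.-1 - x < n) = false); [congr left_def; lia | lia].
by rewrite (_ : m.-1 - x < n); last lia.
Qed.

Definition code_inv x :=
  if is_exc x then select m is_def (count_below is_exc x)
  else if is_def x then select m is_exc (count_below is_def x) else x.

Lemma is_exc_lt x : is_exc x -> x < m. Proof. by case/andP. Qed.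
Lemma is_def_lt x : is_def x -> x < m. Proof. by case/andP. Qed.

Lemma code_inv_exc x : is_exc x ->
  [/\ is_def (code_inv x), code_inv x < m & count_below is_def (code_inv x) = count_below is_exc x].
Proof.
move=> xE; rewrite /code_inv xE; apply: selectP.
by rewrite -count_exc_def_total; apply: ltn_count_below => //; exact: is_exc_lt.
Qed.

Lemma code_inv_def x : is_def x ->
  [/\ is_exc (code_inv x), code_inv x < m & count_below is_exc (code_inv x) = count_below is_def x].
Proof.
move=> xD; rewrite /code_inv (is_def_exc_disjoint xD) xD; apply: selectP.
by rewrite count_exc_def_total; apply: ltn_count_below => //; exact: is_def_lt.
Qed.

Lemma code_inv_fix x : ~~ is_exc x -> ~~ is_def x -> code_inv x = x.
Proof. by rewrite /code_inv => /negbTE -> /negbTE ->. Qed.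

Lemma code_inv_bounded : bounded m code_inv.
Proof.
move=> x xm; case xE: (is_exc x); first by case: (code_inv_exc xE).
case xD: (is_def x); first by case: (code_inv_def xD).
by rewrite code_inv_fix ?xE ?xD.
Qed.

Lemma code_inv_involutive : involutive_below m code_inv.
Proof.
move=> x xm; case xE: (is_exc x).
  have [yD ym yc] := code_inv_exc xE.
  by rewrite {1}/code_inv is_def_exc_disjoint // yD yc select_count // is_exc_lt.
case xD: (is_def x).
  have [yE ym yc] := code_inv_def xD.
  by rewrite {1}/code_inv yE yc select_count // is_def_lt.
by rewrite !code_inv_fix ?xE ?xD.
Qed.

Lemma code_inv_exc_gt x : is_exc x -> x < code_inv x.
Proof.
move=> xE; have [yD ym yc] := code_inv_exc xE.
rewrite ltnNge; apply/negP => le.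
have ne : code_inv x != x by apply/eqP => e; move: yD; rewrite e is_exc_def_disjoint.
have lt : code_inv x < x by rewrite ltn_neqAle ne le.
have := ltn_count_below lt yD; rewrite yc => h.
by have := count_def_le_exc (ltnW (is_exc_lt xE)); lia.
Qed.

Lemma code_inv_def_lt x : is_def x -> code_inv x < x.
Proof.
move=> xD; have [yE ym yc] := code_inv_def xD.
by have := code_inv_exc_gt yE; rewrite code_inv_involutive // is_def_lt.
Qed.

Lemma code_invE x : x < m -> (x < code_inv x) = is_exc x.
Proof.
move=> xm; case xE: (is_exc x); first exact: code_inv_exc_gt.
case xD: (is_def x); first by have := code_inv_def_lt xD; lia.
by rewrite code_inv_fix ?xE ?xD // ltnn.
Qed.

Lemma code_invD x : x < m -> (code_inv x < x) = is_def x.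
Proof.
move=> xm; case xD: (is_def x); first exact: code_inv_def_lt.
case xE: (is_exc x); first by have := code_inv_exc_gt xE; lia.
by rewrite code_inv_fix ?xE ?xD // ltnn.
Qed.

Lemma code_inv_exc_increasing : exc_increasing m code_inv.
Proof.
move=> x y xy ym; rewrite code_invE ?code_invE //; last lia.
move=> xE yE; have [xD _ xc] := code_inv_exc xE; have [yD _ yc] := code_inv_exc yE.
have lt := ltn_count_below xy xE.
rewrite ltnNge; apply/negP => le.
by have := leq_count_below is_def le; lia.
Qed.

Lemma code_inv_def_increasing : def_increasing m code_inv.
Proof.
move=> x y xy ym; rewrite code_invD ?code_invD //; last lia.
move=> xD yD; have [xE _ xc] := code_inv_def xD; have [yE _ yc] := code_inv_def yD.
have lt := ltn_count_below xy xD.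
rewrite ltnNge; apply/negP => le.
by have := leq_count_below is_exc le; lia.
Qed.

Lemma code_inv_no_fixpoint_in_arcs : no_fixpoint_in_arcs m code_inv.
Proof.
move=> e x ex xge gem gx.
have xm : x < m by lia.
have em : e < m by lia.
have eE : is_exc e by rewrite -code_invE //; lia.
have nE : ~~ is_exc x by rewrite -code_invE // gx ltnn.
have nD : ~~ is_def x by rewrite -code_invD // gx ltnn.
have bal := count_exc_def_balanced xm nE nD.
have lt := ltn_count_below ex eE.
have [_ _ c] := code_inv_exc eE.
by have := leq_count_below is_def (ltnW xge); lia.
Qed.

Lemma code_inv_avoids321 : avoids321_below m code_inv.
Proof.
exact: arcs_avoids321 code_inv_bounded code_inv_exc_increasing code_inv_def_increasing code_inv_no_fixpoint_in_arcs.
Qed.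

Lemma code_inv_rev x : x < m -> code_inv (m.-1 - x) = m.-1 - code_inv x.
Proof.
pose s y := m.-1 - code_inv (m.-1 - y).
have gb := code_inv_bounded.
have sb : bounded m s by move=> y ym; rewrite /s; lia.
have si : involutive_below m s.
  move=> y ym; have h : m.-1 - y < m by lia.
  have := gb _ h => h'; rewrite /s.
  rewrite (_ : m.-1 - (m.-1 - code_inv (m.-1 - y)) = code_inv (m.-1 - y)); last lia.
  by rewrite code_inv_involutive //; lia.
have sE y : y < m -> (y < s y) = (y < code_inv y).
  move=> ym; have h : m.-1 - y < m by lia.
  have := gb _ h => h'.
  by rewrite /s code_invE // -is_def_rev // -code_invD //; lia.
have sD y : y < m -> (s y < y) = (code_inv y < y).
  move=> ym; have h : m.-1 - y < m by lia.
  have := gb _ h => h'.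
  by rewrite /s code_invD // -is_exc_rev // -code_invE //; lia.
have sIE : exc_increasing m s.
  move=> x1 y1 xy ym h1 h2; rewrite /s in h1 h2 *.
  have a1 : m.-1 - x1 < m by lia.
  have a2 : m.-1 - y1 < m by lia.
  have b1 := gb _ a1; have b2 := gb _ a2.
  have := @code_inv_def_increasing (m.-1 - y1) (m.-1 - x1); lia.
move=> xm.
have := exc_increasing_involution_unique sb gb si code_inv_involutive sIE
  code_inv_exc_increasing sE sD xm.
by rewrite /s; have := gb _ xm; have := gb (m.-1 - x); lia.
Qed.

End CodeInvolution.

Definition excedance (f : nat -> nat) y := y < f y.
Definition deficiency (f : nat -> nat) y := f y < y.

Section Ballot.
Variables (m : nat) (f : nat -> nat).
Hypotheses (f_bounded : bounded m f) (f_invol : involutive_below m f).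
Hypothesis f_arcs : no_fixpoint_in_arcs m f.

Let f_inj := involutive_below_inj f_invol.

Lemma deficiency_image x : x <= m ->
  [/\ uniq (map f (filter (deficiency f) (iota 0 x))),
      {subset map f (filter (deficiency f) (iota 0 x)) <= filter (excedance f) (iota 0 x)} &
      size (map f (filter (deficiency f) (iota 0 x))) = count_below (deficiency f) x].
Proof.
move=> xm; split.
- rewrite map_inj_in_uniq ?filter_uniq ?iota_uniq // => u v.
  rewrite !mem_filter !mem_iota /= => /andP[_ ux] /andP[_ vx].
  apply: f_inj; lia.
- move=> y /mapP[d]; rewrite mem_filter mem_iota /deficiency /= => /andP[dD dx] ->.
  rewrite mem_filter mem_iota /excedance f_invol /=; lia.
- by rewrite size_map size_filter.
Qed.

Lemma ballot x : x <= m -> count_below (deficiency f) x <= count_below (excedance f) x.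
Proof.
move=> xm; have [u s e] := deficiency_image xm.
by rewrite -e /count_below -size_filter; apply: uniq_leq_size.
Qed.

Lemma ballot_deficiency x : x < m -> f x < x ->
  count_below (deficiency f) x < count_below (excedance f) x.
Proof.
move=> xm fx; have [u s e] := deficiency_image (ltnW xm).
rewrite -e /count_below -size_filter -/(size (f x :: _)); apply: uniq_leq_size.
  rewrite cons_uniq u andbT; apply/negP => /mapP[d].
  rewrite mem_filter mem_iota /= => /andP[_ dx] e'.
  by have := f_inj xm (_ : d < m) e'; lia.
move=> y; rewrite inE => /orP[/eqP ->|]; last exact: s.
rewrite mem_filter mem_iota /excedance f_invol //=; lia.
Qed.

(* No arc passes over a fixed point, so every excedance left of it is matched left of it. *)
Lemma ballot_fixpoint x : x < m -> f x = x ->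
  count_below (deficiency f) x = count_below (excedance f) x.
Proof.
move=> xm fx; apply/eqP; rewrite eqn_leq ballot ?(ltnW xm) //=.
rewrite /count_below -!size_filter -(size_map f).
apply: uniq_leq_size.
  rewrite map_inj_in_uniq ?filter_uniq ?iota_uniq // => u v.
  rewrite !mem_filter !mem_iota /= => /andP[_ ux] /andP[_ vx].
  apply: f_inj; lia.
move=> y /mapP[e]; rewrite mem_filter mem_iota /excedance /= => /andP[eE ex] ->.
have em : e < m by lia.
have fem := f_bounded em.
have fex : f e < x.
  case: (ltngtP (f e) x) => // h; first by case: (f_arcs ex h fem fx).
  by have := f_inj em xm; rewrite fx -h => /(_ erefl); lia.
rewrite mem_filter mem_iota /deficiency f_invol //=; lia.
Qed.

Variables (n : nat) (b : nat -> bool).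
Hypothesis m_double : m = n.*2.
Hypothesis b_exc : forall x, x < n -> b x = (x < f x).

Lemma left_def_height z : z <= n ->
  height b z + count_below (deficiency f) z = count_below (excedance f) z /\
  forall y, y < z -> left_def b y = (f y < y).
Proof.
elim: z => [|z IH] zn; first by split.
have [IH1 IH2] := IH (ltnW zn).
have zm : z < m by lia.
have hz : left_def b z = (f z < z).
  rewrite /left_def b_exc; last lia.
  case: (ltngtP z (f z)) => [h|h|h] /=.
  - lia.
  - have := ballot_deficiency zm h; lia.
  - have := ballot_fixpoint zm (esym h); lia.
split.
  rewrite !count_belowS -IH1 /= b_exc; last lia.
  move: hz; rewrite /left_def b_exc; last lia.
  rewrite /deficiency /excedance; case: (ltngtP z (f z)) => [h|h|h] /=; lia.
move=> y; rewrite ltnS leq_eqVlt => /orP[/eqP ->|] //; apply: IH2.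
Qed.

Lemma left_def_code z : z < n -> left_def b z = (f z < z).
Proof. by move=> zn; apply: (proj2 (left_def_height (leqnn n))). Qed.

End Ballot.

Fixpoint true_runs (s : seq bool) : nat :=
  if s is x :: s' then (x && ((s' == [::]) || ~~ head false s')) + true_runs s' else 0.

Lemma true_runsE (s : seq bool) :
  true_runs s = \sum_(1 <= p < (size s).+1)
                  (nth false s p.-1 && ((p == size s) || ~~ nth false s p)).
Proof.
elim: s => [|x s IH]; first by rewrite big_nil.
rewrite /= big_nat_recl // IH big_add1 /=; congr (_ + _).
  by case: s {IH} => [|y s].
by rewrite [RHS]big_add1.
Qed.

Section PermCode.
Variable n : nat.
Local Notation m := n.*2.

Definition pval (pi : 'S_m) x := nth 0 (oneline pi) x.

Lemma pval_ord pi (i : 'I_m) : pval pi i = pi i.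
Proof. by rewrite /pval /oneline (nth_map i) ?size_enum_ord // nth_ord_enum. Qed.

Lemma pvalE pi x (h : x < m) : pval pi x = pi (Ordinal h).
Proof. by rewrite -pval_ord. Qed.

Lemma pval_bounded pi : bounded m (pval pi).
Proof. by move=> x h; rewrite (pvalE pi h). Qed.

Lemma pval_involutive pi : involution pi -> involutive_below m (pval pi).
Proof.
move=> /eqP E x h; rewrite (pvalE pi h) pval_ord.
by have := permK pi (Ordinal h); rewrite E => ->.
Qed.

Lemma pval_rev pi : centrosymmetric pi ->
  forall x, x < m -> pval pi (m.-1 - x) = m.-1 - pval pi x.
Proof.
move=> /forallP C x h; have := C (Ordinal h); rewrite (pvalE pi h).
have -> : m.-1 - x = rev_ord (Ordinal h) by rewrite /=; lia.
rewrite pval_ord => /eqP; lia.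
Qed.

Lemma pval_avoids321 pi : avoids321 pi -> avoids321_below m (pval pi).
Proof.
move=> /negP A i j k ij jk km fji fkj; apply: A.
have jm : j < m by lia.
have im : i < m by lia.
apply/existsP; exists (Ordinal im); apply/existsP; exists (Ordinal jm).
apply/existsP; exists (Ordinal km); apply/and4P; split => //.
  by rewrite -!pval_ord.
by rewrite -!pval_ord.
Qed.

Definition tuple_inv (t : n.-tuple bool) := code_inv n (nth false t).

Definition tuple_inv_ord (t : n.-tuple bool) (i : 'I_m) : 'I_m := insubd i (tuple_inv t i).

Lemma tuple_inv_ord_val t (i : 'I_m) : val (tuple_inv_ord t i) = tuple_inv t i.
Proof. by rewrite /tuple_inv_ord val_insubd code_inv_bounded. Qed.

Lemma tuple_inv_ord_inj t : injective (tuple_inv_ord t).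
Proof.
move=> i j /(congr1 val); rewrite !tuple_inv_ord_val => e; apply: ord_inj.
exact: (involutive_below_inj (@code_inv_involutive n (nth false t)) (ltn_ord i) (ltn_ord j) e).
Qed.

Definition perm_of_code t : 'S_m := perm (@tuple_inv_ord_inj t).

Lemma pval_perm_of_code t x : x < m -> pval (perm_of_code t) x = tuple_inv t x.
Proof. by move=> h; rewrite (pvalE _ h) permE tuple_inv_ord_val. Qed.

Definition code_of_perm (pi : 'S_m) : n.-tuple bool := [tuple (val i < pval pi i) | i < n].

Lemma nth_code_of_perm pi x : x < n -> nth false (code_of_perm pi) x = (x < pval pi x).
Proof. by move=> h; rewrite (nth_mktuple _ _ (Ordinal h)). Qed.

Lemma IC321_perm_of_code t : IC321 (perm_of_code t).
Proof.
have B := @code_inv_bounded n (nth false t).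
have I := @code_inv_involutive n (nth false t).
apply/and3P; split.
- apply/forallP => i; apply/eqP.
  rewrite -!pval_ord !pval_perm_of_code //.
  have -> : nat_of_ord (rev_ord i) = m.-1 - i by rewrite /=; lia.
  rewrite /tuple_inv code_inv_rev //.
  have := B _ (ltn_ord i); lia.
- apply/eqP/permP => i.
  apply: (canLR (permK _)); apply: ord_inj.
  by rewrite -!pval_ord !pval_perm_of_code ?(B _ (ltn_ord i)) // /tuple_inv I.
- apply/negP => /existsP[i /existsP[j /existsP[k /and4P[ij jk fji fkj]]]].
  move: fji fkj; rewrite -!pval_ord !pval_perm_of_code // => fji fkj.
  exact: (@code_inv_avoids321 n (nth false t) i j k ij jk (ltn_ord k) fji fkj).
Qed.

Lemma code_of_permK t : code_of_perm (perm_of_code t) = t.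
Proof.
apply: eq_from_tnth => i; have im : i < m by have := ltn_ord i; lia.
rewrite (tnth_nth false) nth_code_of_perm // pval_perm_of_code //.
by rewrite /tuple_inv code_invE // /is_exc im ltn_ord (tnth_nth false).
Qed.

Lemma perm_of_codeK pi : IC321 pi -> perm_of_code (code_of_perm pi) = pi.
Proof.
case/and3P => Ce Ie Ae.
apply/permP => i; apply: ord_inj; rewrite -!pval_ord pval_perm_of_code //.
set b := nth false (code_of_perm pi).
have Bf := pval_bounded pi; have If := pval_involutive Ie.
have Af := pval_avoids321 Ae; have Cf := pval_rev Ce.
have FCf := avoids321_no_fixpoint_in_arcs If Af.
have bE x : x < n -> b x = (x < pval pi x) by move=> h; rewrite /b nth_code_of_perm.
have St := left_def_code Bf If FCf erefl bE.
apply: (exc_increasing_involution_unique (@code_inv_bounded n b) Bf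
  (@code_inv_involutive n b) If (@code_inv_exc_increasing n b)
  (avoids321_exc_increasing Bf If Af)) => // x xm.
- rewrite code_invE // /is_exc xm.
  case: (ltnP x n) => xn; first exact: bE.
  have zn : m.-1 - x < n by lia.
  rewrite St // Cf //; have := Bf _ xm; lia.
- rewrite code_invD // /is_def xm.
  case: (ltnP x n) => xn; first exact: St.
  have zn : m.-1 - x < n by lia.
  rewrite bE // Cf //; have := Bf _ xm; lia.
Qed.

Lemma desplus_perm_of_code t : desplus (perm_of_code t) = true_runs t.
Proof.
rewrite /desplus doubleK true_runsE size_tuple; apply: eq_big_nat => p /andP[p1 pn].
set b := nth false t.
have pm : p < m by lia.
have jm : p.-1 < m by lia.
rewrite /is_descent p1 pm /= -/(pval _ _) -/(pval _ _) !pval_perm_of_code //.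
have D := descentE (@code_inv_bounded n b) (@code_inv_involutive n b)
  (@code_inv_exc_increasing n b) (@code_inv_def_increasing n b)
  (@code_inv_no_fixpoint_in_arcs n b) (j := p.-1).
rewrite -(ltn_predK p1) in pm *.
rewrite D // /tuple_inv code_invE // code_invD // /is_exc /is_def jm pm.
rewrite (_ : p.-1 < n) /=; last lia.
rewrite (ltn_predK p1).
case bj : (b p.-1) => //=.
case: (ltnP p n) => h.
  rewrite (_ : p == n = false) /=; last lia.
  by rewrite /left_def -[in height _ p](ltn_predK p1) /= bj andbT.
have -> : m.-1 - p = p.-1 by lia.
by rewrite bj (_ : p = n) ?eqxx //; lia.
Qed.

End PermCode.

Section BinomialBisection.
Variable R : comNzRingType.
Local Open Scope ring_scope.

(* Odd and even parts of (1 + sqrt X)^n, the odd part multiplied by sqrt X. *)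
Fixpoint binom_bisect (n : nat) : {poly R} * {poly R} :=
  if n is n'.+1 then
    ('X * (binom_bisect n').2 + (binom_bisect n').1, (binom_bisect n').1 + (binom_bisect n').2)
  else (0, 1).

Lemma binom_bisectE (N n : nat) : (n <= N)%N ->
  (binom_bisect n).1 = \sum_(k < N.+1) ('C(n, k.*2.+1))%:R *: 'X^(k.+1) /\
  (binom_bisect n).2 = \sum_(k < N.+1) ('C(n, k.*2))%:R *: 'X^k.
Proof.
elim: n => [|n IH] le.
  split; first by rewrite /= big1 // => k _; rewrite bin0n /= scale0r.
  rewrite /= big_ord_recl /= bin0 scale1r expr0 big1 ?addr0 // => k _.
  by rewrite bin0n /= scale0r.
have [IH1 IH2] := IH (ltnW le).
rewrite /= IH1 IH2; split.
  rewrite big_distrr /= -big_split /=; apply: eq_bigr => k _.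
  by rewrite binS natrD scalerDl -scalerAr exprS addrC.
rewrite [RHS]big_ord_recl [X in _ + X = _]big_ord_recl [X in X + _ = _]big_ord_recr /=.
rewrite !double0 !bin0 (@bin_small n (N.*2.+1)); last by rewrite -addnn; lia.
rewrite scale0r addr0 addrCA; congr (_ + _).
rewrite -big_split /=; apply: eq_bigr => k _.
by rewrite -scalerDl -natrD doubleS binS addnC.
Qed.

Lemma horner_binom_bisect (s : R) (N : nat) :
  (1 + s) ^+ N + (1 - s) ^+ N = 2%:R * (binom_bisect N).2.[s * s] /\
  s * ((1 + s) ^+ N - (1 - s) ^+ N) = 2%:R * (binom_bisect N).1.[s * s].
Proof.
elim: N => [|N [IH1 IH2]]; first by rewrite /= !expr0 hornerC horner0; split; ring.
rewrite /= !hornerE !exprS.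
move: IH1 IH2; set A := (1 + s) ^+ N; set B := (1 - s) ^+ N => IH1 IH2; split.
  have -> : (1 + s) * A + (1 - s) * B = (A + B) + s * (A - B) by ring.
  by rewrite IH1 IH2; ring.
have -> : s * ((1 + s) * A - (1 - s) * B) = s * (A - B) + (s * s) * (A + B) by ring.
by rewrite IH1 IH2; ring.
Qed.

Lemma sum_tuple_cons (V : nmodType) n (F : seq bool -> V) :
  \sum_(t : n.+1.-tuple bool) F t = \sum_(x : bool) \sum_(t : n.-tuple bool) F (x :: t).
Proof.
rewrite pair_big /=.
rewrite (reindex (fun p : bool * n.-tuple bool => [tuple of p.1 :: p.2])) //=.
exists (fun t : n.+1.-tuple bool => (thead t, [tuple of behead t])) => [[x t]|t] _ /=.
  by congr (_, _); apply: val_inj.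
by rewrite [RHS]tuple_eta.
Qed.

Lemma sum_true_runs n :
  \sum_(t : n.-tuple bool | head false t) 'X^(true_runs t) = (binom_bisect n).1 /\
  \sum_(t : n.-tuple bool | ~~ head false t) 'X^(true_runs t) = (binom_bisect n).2.
Proof.
rewrite big_mkcond [in X in _ /\ X]big_mkcond /=.
elim: n => [|n [IH1 IH2]].
  by split; rewrite (big_pred1 [tuple]) //= => t; rewrite [t]tuple0; apply/esym/eqP.
rewrite (@sum_tuple_cons _ n
  (fun s => if head false s then 'X^(true_runs s) else 0 : {poly R})).
rewrite (@sum_tuple_cons _ n
  (fun s => if ~~ head false s then 'X^(true_runs s) else 0 : {poly R})).
rewrite !big_bool /= -IH1 -IH2 !big1_eq addr0 add0r; split.
  rewrite mulr_sumr -big_split /=; apply: eq_bigr => t _.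
  case: t => [[|x t] /= _]; first by rewrite expr0 mulr1 addr0 expr1.
  by case: x; rewrite /= ?mulr0 ?add0r ?addr0 ?add1n ?exprS.
by rewrite -big_split /=; apply: eq_bigr => t _; case: ifP; rewrite ?addr0 ?add0r.
Qed.

End BinomialBisection.

Local Open Scope ring_scope.

Lemma even_binom_poly (R : comNzRingType) n :
  \sum_(0 <= k < n.+2) ('C(n.+1, k.*2))%:R *: ('X^k : {poly R}) = (binom_bisect R n.+1).2.
Proof. by have [_ ->] := binom_bisectE R (leqnn n.+1); rewrite big_mkord. Qed.

Lemma even_binom_sum_sqrt (R : rcfType) n (q : R) : 0 <= q ->
  \sum_(0 <= k < n.+2) ('C(n.+1, k.*2))%:R * q ^+ k
    = ((1 + Num.sqrt q) ^+ n.+1 + (1 - Num.sqrt q) ^+ n.+1) / 2%:R.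
Proof.
move=> q0; have [-> _] := horner_binom_bisect (Num.sqrt q) n.+1.
rewrite -expr2 sqr_sqrtr // -even_binom_poly horner_sum mulrC mulrA mulVf ?pnatr_eq0 //.
by rewrite mul1r; apply: eq_bigr => k _; rewrite hornerZ hornerXn.
Qed.

Theorem mainTheorem1 (R : rcfType) (n : nat) :
  (\sum_(pi : 'S_(n.*2) | IC321 pi) 'X^(desplus pi)
     = \sum_(0 <= k < n.+2) ('C(n.+1, k.*2))%:R *: ('X^k : {poly R}))
  /\
  (forall q : R, 0 <= q ->
     \sum_(0 <= k < n.+2) ('C(n.+1, k.*2))%:R * q ^+ k
       = ((1 + Num.sqrt q) ^+ n.+1 + (1 - Num.sqrt q) ^+ n.+1) / 2%:R).
Proof.
split; last exact: even_binom_sum_sqrt.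
rewrite (reindex_onto (@perm_of_code n) (@code_of_perm n) (fun pi => @perm_of_codeK n pi)).
rewrite (eq_bigl predT) => [|t]; last by rewrite IC321_perm_of_code code_of_permK eqxx.
under eq_bigr do rewrite desplus_perm_of_code.
have [runs_true runs_false] := sum_true_runs R n.
rewrite even_binom_poly (bigID (fun t : n.-tuple bool => head false t)) /=.
by rewrite runs_true runs_false.
Qed.
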